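(* Let $A\in\mathbb{R}^{m\times n}$ have no zero row, with rows $a_1^T,\dots,a_m^T$, let $b\in\mathbb{R}^m$ with $Ax=b$ consistent, and let $x^\dagger$ be the minimum-norm least-squares solution. Let $0<\mu_i<2$ for $1\le i\le m$, ${\bf u}=(\mu_1,\dots,\mu_m)$, $\Lambda=\mathrm{diag}(\mu_1,\dots,\mu_m)$, $M=\mathrm{diag}(1/\|a_1\|_2^2,\dots,1/\|a_m\|_2^2)$, $P_k(\mu_k)=I-\mu_ka_ka_k^T/\|a_k\|_2^2$, $Q({\bf u})=P_m(\mu_m)\cdots P_1(\mu_1)$, and let $C({\bf u})\in\mathbb{R}^{m\times m}$ be a unit upper triangular matrix with $A_{\mathcal S}({\bf u})=C({\bf u})A$, where $A_{\mathcal S}({\bf u})=(Q_1({\bf u}_1)a_1,\dots,Q_m({\bf u}_m)a_m)^T$, $Q_j({\bf u}_j)=P_m(\mu_m)\cdots P_{j+1}(\mu_{j+1})$ for $j<m$, $Q_m({\bf u}_m)=I$. Let $y_0\in\mathbb{R}^n$, $y_k=y_{k-1}+A^T[C({\bf u})]^T\Lambda M(b-Ay_{k-1})$ for $k\ge1$, and $\bar e_k=y_k-x^\dagger-P_{N(A)}y_0$. Let $\sigma_i({\bf u})$ denote the singular values of $Q({\bf u})$. Then for all $k\ge1$, $$\|\bar e_k\|_2\le\max_{0<\sigma_i({\bf u})<1}\sigma_i({\bf u})\,\|\bar e_{k-1}\|_2\quad\text{and}\quad \|\bar e_k\|_2\le\max_{0<\sigma_i({\bf u})<1}[\sigma_i({\bf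 u})]^k\,\|\bar e_0\|_2.$$
   Context: $P_{N(A)}$ is the orthogonal projection onto the null space of $A$; the maxima are over those singular values of $Q({\bf u})$ lying strictly between $0$ and $1$. *)

From HB Require Import structures.
From mathcomp Require Import all_boot all_order all_algebra.
From mathcomp Require Import reals.
Set Implicit Arguments. Unset Strict Implicit. Unset Printing Implicit Defensive.
Import Order.TTheory GRing.Theory Num.Theory.
Local Open Scope ring_scope.

Section Defs.
Variable R : realType.

Definition norm2 (p : nat) (v : 'cV[R]_p) : R := Num.sqrt (\sum_i (v i 0) ^+ 2).

Definition arow (m n : nat) (A : 'M[R]_(m, n)) (k : 'I_m) : 'cV[R]_n := (row k A)^T.

Definition rownorm2 (m n : nat) (A : 'M[R]_(m, n)) (k : 'I_m) : R :=
  norm2 (arow A k) ^+ 2.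

Definition Pk (m n : nat) (A : 'M[R]_(m, n)) (mu : 'I_m -> R) (k : 'I_m) : 'M[R]_n :=
  1%:M - (mu k / rownorm2 A k) *: (arow A k *m (arow A k)^T).

(* Q(u) = P_m(mu_m) ... P_1(mu_1)  (leftmost factor has largest index) *)
Definition Qmat (m n : nat) (A : 'M[R]_(m, n)) (mu : 'I_m -> R) : 'M[R]_n :=
  \prod_(i < m) Pk A mu (rev_ord i).

Definition Qj (m n : nat) (A : 'M[R]_(m, n)) (mu : 'I_m -> R) (j : 'I_m) : 'M[R]_n :=
  \prod_(i < m | (j < rev_ord i)%N) Pk A mu (rev_ord i).

Definition AS (m n : nat) (A : 'M[R]_(m, n)) (mu : 'I_m -> R) : 'M[R]_(m, n) :=
  \matrix_(i, j) (Qj A mu i *m arow A i) j 0.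

Definition Lam (m : nat) (mu : 'I_m -> R) : 'M[R]_m := diag_mx (\row_i mu i).
Definition Mdiag (m n : nat) (A : 'M[R]_(m, n)) : 'M[R]_m :=
  diag_mx (\row_i (rownorm2 A i)^-1).

Definition unit_upper (m : nat) (C : 'M[R]_m) : Prop :=
  (forall i, C i i = 1) /\ (forall i j : 'I_m, (j < i)%N -> C i j = 0).

Definition min_norm_lsq (m n : nat) (A : 'M[R]_(m, n)) (b : 'cV[R]_m) (x : 'cV[R]_n) : Prop :=
  (forall y, norm2 (A *m x - b) <= norm2 (A *m y - b)) /\
  (forall y, norm2 (A *m y - b) <= norm2 (A *m x - b) -> norm2 x <= norm2 y).

Definition nullproj (m n : nat) (A : 'M[R]_(m, n)) (y z : 'cV[R]_n) : Prop :=
  A *m z = 0 /\ (forall w : 'cV[R]_n, A *m w = 0 -> ((y - z)^T *m w) = 0).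

Definition singular_value (n : nat) (Q : 'M[R]_n) (s : R) : Prop :=
  0 <= s /\ eigenvalue (Q^T *m Q) (s ^+ 2).

(* s = max { sigma_i : 0 < sigma_i < 1 }, with the convention max(empty) = 0 *)
Definition max_sv_in01 (n : nat) (Q : 'M[R]_n) (s : R) : Prop :=
  ((forall t, ~ (singular_value Q t /\ 0 < t < 1)) /\ s = 0) \/
  ((singular_value Q s /\ 0 < s < 1) /\
   (forall t, singular_value Q t -> 0 < t < 1 -> t <= s)).

End Defs.

From HB Require Import structures.
From mathcomp Require Import all_boot all_order all_algebra.
From mathcomp Require Import reals.
From mathcomp Require Import complex spectral sesquilinear.
From mathcomp Require Import ring zify.
Import Order.TTheory GRing.Theory Num.Theory.
Local Open Scope ring_scope.
Set Implicit Arguments. Unset Strict Implicit. Unset Printing Implicit Defensive.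

(* Telescoping I - Q = \sum_j Q_j (I - P_j) and A_S = C A give Q = I - K A with
   K = A^T C^T Lambda M, so the error e_k = y_k - x^+ - P_N(A) y_0 satisfies
   e_k = Q e_(k-1) and stays orthogonal to N(A).  Each P_j is nonexpansive and
   preserves the norm of z only when a_j^T z = 0, so Q preserves the norm of z
   only when A z = 0.  Hence the eigenvectors of the symmetric matrix Q^T Q with
   eigenvalue >= 1 lie in N(A), while its eigenvalues in (0, 1) are squared
   singular values, at most s^2; expanding e in an eigenbasis of Q^T Q gives
   |Q e| <= s |e|. *)

Definition rev_prod (T : pzSemiRingType) (F : nat -> T) (N : nat) : T :=
  \prod_(i < N) F (N - i.+1)%N.

Lemma rev_prodS (T : pzSemiRingType) (F : nat -> T) N :
  rev_prod F N.+1 = F N * rev_prod F N.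
Proof. by rewrite /rev_prod big_ord_recl subSS subn0. Qed.

Lemma one_sub_rev_prod (T : pzRingType) (F : nat -> T) N :
  1 - rev_prod F N =
  \sum_(j < N) (\prod_(i < N | (j < N - i.+1)%N) F (N - i.+1)%N) * (1 - F j).
Proof.
elim: N => [|N IH]; first by rewrite /rev_prod !big_ord0 subrr.
have peel (j : 'I_N) :
    \prod_(i < N.+1 | (j < N.+1 - i.+1)%N) F (N.+1 - i.+1)%N =
    F N * \prod_(i < N | (j < N - i.+1)%N) F (N - i.+1)%N.
  by rewrite big_mkcond big_ord_recl /= subSS subn0 (ltn_ord j) [in RHS]big_mkcond.
have last_empty : \prod_(i < N.+1 | (N < N.+1 - i.+1)%N) F (N.+1 - i.+1)%N = 1.
  by apply: big1 => i; rewrite subSS; lia.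
rewrite big_ord_recr /= last_empty mul1r.
under eq_bigr => j _ do rewrite (peel j) -mulrA.
by rewrite -big_distrr /= -IH rev_prodS mulrBr mulr1 addrC addrA subrK.
Qed.

Section Dot.
Variable R : realDomainType.
Implicit Types (n : nat).

Definition dot n (u v : 'cV[R]_n) : R := \sum_i u i 0 * v i 0.

Lemma dotC n (u v : 'cV[R]_n) : dot u v = dot v u.
Proof. by apply: eq_bigr => i _; rewrite mulrC. Qed.

Lemma dot0r n (u : 'cV[R]_n) : dot u 0 = 0.
Proof. by rewrite /dot big1 // => i _; rewrite mxE mulr0. Qed.

Lemma dotBl n (u v w : 'cV[R]_n) : dot (u - v) w = dot u w - dot v w.
Proof. by rewrite /dot -sumrB; apply: eq_bigr => i _; rewrite !mxE mulrBl. Qed.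

Lemma dotZr n (u v : 'cV[R]_n) (c : R) : dot u (c *: v) = c * dot u v.
Proof. by rewrite /dot mulr_sumr; apply: eq_bigr => i _; rewrite mxE mulrCA. Qed.

Lemma dot_ge0 n (u : 'cV[R]_n) : 0 <= dot u u.
Proof. by apply: sumr_ge0 => i _; rewrite -expr2 sqr_ge0. Qed.

Lemma dot_eq0 n (u : 'cV[R]_n) : (dot u u == 0) = (u == 0).
Proof.
apply/idP/eqP => [|->]; last by rewrite dot0r.
rewrite psumr_eq0 => [/allP u0|i _]; last by rewrite -expr2 sqr_ge0.
apply/matrixP => i j; rewrite ord1 mxE.
by have /= := u0 i (mem_index_enum _); rewrite mulf_eq0 orbb => /eqP.
Qed.

Lemma dot_gt0 n (u : 'cV[R]_n) : (0 < dot u u) = (u != 0).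
Proof. by rewrite lt_def dot_ge0 dot_eq0 andbT. Qed.

Lemma dot_mx n (u v : 'cV[R]_n) : (u^T *m v) 0 0 = dot u v.
Proof. by rewrite mxE; apply: eq_bigr => i _; rewrite mxE. Qed.

Lemma dot_mulmxl m n (M : 'M[R]_(m, n)) (u : 'cV[R]_n) (v : 'cV[R]_m) :
  dot (M *m u) v = dot u (M^T *m v).
Proof. by rewrite -!dot_mx trmx_mul mulmxA. Qed.

Lemma dotDZ n (u v : 'cV[R]_n) (c : R) :
  dot (u + c *: v) (u + c *: v) = dot u u + 2 * c * dot u v + c ^+ 2 * dot v v.
Proof.
by rewrite /dot !mulr_sumr -!big_split; apply: eq_bigr => i _; rewrite !mxE /=; ring.
Qed.

Definition ker_orth m n (A : 'M[R]_(m, n)) (u : 'cV[R]_n) : Prop :=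
  forall w, A *m w = 0 -> dot u w = 0.

Lemma ker_orthB m n (A : 'M[R]_(m, n)) (u v : 'cV[R]_n) :
  ker_orth A u -> ker_orth A v -> ker_orth A (u - v).
Proof. by move=> uA vA w Aw; rewrite dotBl uA // vA // subr0. Qed.

Lemma ker_orth_step m n (A : 'M[R]_(m, n)) (L : 'M[R]_m) (u : 'cV[R]_n) :
  ker_orth A u -> ker_orth A ((1%:M - A^T *m L *m A) *m u).
Proof.
move=> uA w Aw; rewrite mulmxBl mul1mx dotBl uA // -!mulmxA dot_mulmxl trmxK.
by rewrite Aw dot0r subr0.
Qed.

End Dot.

Section RevProdContraction.
Variables (R : realDomainType) (n : nat) (F : nat -> 'M[R]_n).
Hypothesis F_nonexpansive : forall k z, dot (F k *m z) (F k *m z) <= dot z z.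
Hypothesis F_norm_fixed :
  forall k z, dot z z <= dot (F k *m z) (F k *m z) -> F k *m z = z.

Lemma rev_prod_nonexpansive N (z : 'cV[R]_n) :
  dot (rev_prod F N *m z) (rev_prod F N *m z) <= dot z z.
Proof.
elim: N => [|N IH]; first by rewrite /rev_prod big_ord0 mul1mx.
by rewrite rev_prodS -mulmxE -mulmxA (le_trans (F_nonexpansive _ _)).
Qed.

Lemma rev_prod_fixed N (z : 'cV[R]_n) :
  (forall k, (k < N)%N -> F k *m z = z) -> rev_prod F N *m z = z.
Proof.
elim: N => [|N IH] Fz; first by rewrite /rev_prod big_ord0 mul1mx.
by rewrite rev_prodS -mulmxE -mulmxA IH ?Fz // => k kN; rewrite Fz // ltnW.
Qed.

Lemma rev_prod_norm_fixed N (z : 'cV[R]_n) :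
  dot z z <= dot (rev_prod F N *m z) (rev_prod F N *m z) ->
  forall k, (k < N)%N -> F k *m z = z.
Proof.
elim: N => [//|N IH]; rewrite rev_prodS -mulmxE -mulmxA.
set w := rev_prod F N *m z => zw.
have wz : dot w w <= dot z z := rev_prod_nonexpansive N z.
have Fw : dot w w <= dot (F N *m w) (F N *m w) := le_trans wz zw.
have Fz k : (k < N)%N -> F k *m z = z.
  by apply: IH; apply: le_trans zw (F_nonexpansive _ _).
move=> k; rewrite ltnS leq_eqVlt => /predU1P[->|]; last exact: Fz.
have wz_eq : w = z := rev_prod_fixed Fz.
by rewrite -wz_eq; apply: F_norm_fixed.
Qed.

End RevProdContraction.

Section Norm2.
Variable R : realType.

Lemma norm2E n (u : 'cV[R]_n) : norm2 u = Num.sqrt (dot u u).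
Proof. by rewrite /norm2; congr Num.sqrt; apply: eq_bigr => i _; rewrite expr2. Qed.

Lemma norm2_le0 n (u : 'cV[R]_n) : (norm2 u <= 0) = (u == 0).
Proof.
by rewrite norm2E -dot_eq0 eq_le dot_ge0 andbT -[RHS]sqrtr_eq0 eq_le sqrtr_ge0 andbT.
Qed.

Lemma norm2_le_scale n (u v : 'cV[R]_n) (s : R) :
  0 <= s -> dot u u <= s ^+ 2 * dot v v -> norm2 u <= s * norm2 v.
Proof.
move=> s_ge0 uv; rewrite !norm2E -(ger0_norm s_ge0) -sqrtr_sqr -sqrtrM ?sqr_ge0 //.
by rewrite ler_sqrt // mulr_ge0 ?sqr_ge0 ?dot_ge0.
Qed.

End Norm2.

Section Projections.
Variables (R : realType) (m n : nat) (A : 'M[R]_(m, n)) (mu : 'I_m -> R).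

Lemma mulmx_arow (z : 'cV[R]_n) k : (A *m z) k 0 = dot (arow A k) z.
Proof. by rewrite mxE; apply: eq_bigr => i _; rewrite !mxE. Qed.

Lemma rownorm2E k : rownorm2 A k = dot (arow A k) (arow A k).
Proof. by rewrite /rownorm2 norm2E sqr_sqrtr // dot_ge0. Qed.

Lemma rownorm2_gt0 k : row k A != 0 -> 0 < rownorm2 A k.
Proof.
move=> Ak; rewrite rownorm2E dot_gt0; apply: contraNneq Ak => a0.
by rewrite -[row k A]trmxK -/(arow A k) a0 trmx0.
Qed.

Lemma PkE k (z : 'cV[R]_n) :
  Pk A mu k *m z = z - (mu k / rownorm2 A k * dot (arow A k) z) *: arow A k.
Proof.
rewrite /Pk mulmxBl mul1mx -scalemxAl -mulmxA; congr (_ - _).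
apply/matrixP => i j; rewrite ord1 !mxE big_ord1 -dot_mx !mxE.
by rewrite [A k i * _]mulrC mulrA.
Qed.

Lemma Pk_sqnorm k (z : 'cV[R]_n) : row k A != 0 ->
  dot (Pk A mu k *m z) (Pk A mu k *m z) =
  dot z z - mu k * (2 - mu k) / rownorm2 A k * dot (arow A k) z ^+ 2.
Proof.
move=> /rownorm2_gt0 r_gt0.
rewrite PkE -scaleNr dotDZ (dotC z) -rownorm2E.
by field; rewrite gt_eqF.
Qed.

Hypothesis rowA_neq0 : forall k, row k A != 0.
Hypothesis mu_in02 : forall k, 0 < mu k < 2.

Lemma Pk_sqnorm_coef_gt0 k : 0 < mu k * (2 - mu k) / rownorm2 A k.
Proof.
have /andP[mu_gt0 mu_lt2] := mu_in02 k.
by rewrite divr_gt0 ?rownorm2_gt0 // mulr_gt0 // subr_gt0.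
Qed.

Lemma Pk_nonexpansive k (z : 'cV[R]_n) :
  dot (Pk A mu k *m z) (Pk A mu k *m z) <= dot z z.
Proof.
by rewrite Pk_sqnorm // gerBl mulr_ge0 ?sqr_ge0 // ltW ?Pk_sqnorm_coef_gt0.
Qed.

Lemma Pk_norm_fixed_orth k (z : 'cV[R]_n) :
  dot z z <= dot (Pk A mu k *m z) (Pk A mu k *m z) -> dot (arow A k) z = 0.
Proof.
rewrite Pk_sqnorm // lerBrDr gerDl pmulr_rle0 ?Pk_sqnorm_coef_gt0 // => t2_le0.
by apply/eqP; rewrite -sqrf_eq0 eq_le t2_le0 sqr_ge0.
Qed.

Lemma Pk_norm_fixed k (z : 'cV[R]_n) :
  dot z z <= dot (Pk A mu k *m z) (Pk A mu k *m z) -> Pk A mu k *m z = z.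
Proof. by move=> /Pk_norm_fixed_orth az; rewrite PkE az mulr0 scale0r subr0. Qed.

End Projections.

Section SweepMatrix.
Variables (R : realType) (m n : nat) (A : 'M[R]_(m, n)) (mu : 'I_m -> R).

(* P_k indexed by nat, so that Q = rev_prod Pnat m; out-of-range indices give I. *)
Definition Pnat (k : nat) : 'M[R]_n :=
  if insub k is Some i then Pk A mu i else 1%:M.

Lemma Pnat_ord (i : 'I_m) : Pnat i = Pk A mu i.
Proof. by rewrite /Pnat valK. Qed.

Lemma QmatE : Qmat A mu = rev_prod Pnat m.
Proof. by apply: eq_bigr => i _; rewrite -(Pnat_ord (rev_ord i)). Qed.

Lemma QjE j : Qj A mu j = \prod_(i < m | (j < m - i.+1)%N) Pnat (m - i.+1)%N.
Proof. by apply: eq_bigr => i _; rewrite -(Pnat_ord (rev_ord i)). Qed.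

Lemma one_sub_Qmat : 1%:M - Qmat A mu =
  \sum_(j < m) Qj A mu j *m ((mu j / rownorm2 A j) *: (arow A j *m (arow A j)^T)).
Proof.
rewrite QmatE one_sub_rev_prod; apply: eq_bigr => j _.
by rewrite -QjE Pnat_ord mulmxE /Pk opprB addrC subrK.
Qed.

Lemma AS_Lam_Mdiag : (AS A mu)^T *m Lam mu *m Mdiag A *m A = 1%:M - Qmat A mu.
Proof.
rewrite one_sub_Qmat /Lam /Mdiag !mul_mx_diag; apply/matrixP => p q.
rewrite !mxE summxE; apply: eq_bigr => j _.
by rewrite -scalemxAr mulmxA !mxE big_ord1 /arow /AS !mxE; ring.
Qed.

Lemma Qmat_iterationE (C : 'M[R]_m) : AS A mu = C *m A ->
  Qmat A mu = 1%:M - A^T *m C^T *m Lam mu *m Mdiag A *m A.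
Proof. by move=> AS_CA; rewrite -trmx_mul -AS_CA AS_Lam_Mdiag opprB addrC subrK. Qed.

Hypothesis rowA_neq0 : forall k, row k A != 0.
Hypothesis mu_in02 : forall k, 0 < mu k < 2.

Lemma Pnat_nonexpansive k (z : 'cV[R]_n) :
  dot (Pnat k *m z) (Pnat k *m z) <= dot z z.
Proof. by rewrite /Pnat; case: insubP => [i _ _|_]; rewrite ?Pk_nonexpansive ?mul1mx. Qed.

Lemma Pnat_norm_fixed k (z : 'cV[R]_n) :
  dot z z <= dot (Pnat k *m z) (Pnat k *m z) -> Pnat k *m z = z.
Proof.
by rewrite /Pnat; case: insubP => [i _ _|_]; [exact: Pk_norm_fixed | rewrite mul1mx].
Qed.

Lemma Qmat_norm_fixed_ker (z : 'cV[R]_n) :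
  dot z z <= dot (Qmat A mu *m z) (Qmat A mu *m z) -> A *m z = 0.
Proof.
rewrite QmatE => /(rev_prod_norm_fixed Pnat_nonexpansive Pnat_norm_fixed) Pz.
apply/matrixP => k j; rewrite ord1 mulmx_arow mxE.
apply: (Pk_norm_fixed_orth rowA_neq0 mu_in02).
by rewrite -Pnat_ord Pz.
Qed.

End SweepMatrix.

Section SymmetricRayleigh.
Variable R : rcfType.
Local Open Scope sesquilinear_scope.
Local Notation toC := (real_complex R).
Local Notation Rec := (@complex.Re R).
Local Notation Imc := (@complex.Im R).

Lemma Re_mul_real (z : R[i]) (k : R) : Rec (z * toC k) = Rec z * k.
Proof. by case: z => a b /=; rewrite mulr0 subr0. Qed.

Lemma Im_mul_real (z : R[i]) (k : R) : Imc (z * toC k) = Imc z * k.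
Proof. by case: z => a b /=; rewrite mulr0 add0r. Qed.

Lemma conj_toC (k : R) : Num.conj (toC k) = toC k.
Proof. by rewrite conj_Creal // complex_real. Qed.

Lemma map_Re_mulmx_real p q r (x : 'M[R[i]]_(p, q)) (B : 'M[R]_(q, r)) :
  map_mx Rec (x *m map_mx toC B) = map_mx Rec x *m B.
Proof.
apply/matrixP => i j; rewrite !mxE raddf_sum; apply: eq_bigr => l _.
by rewrite !mxE; apply: Re_mul_real.
Qed.

Lemma map_Im_mulmx_real p q r (x : 'M[R[i]]_(p, q)) (B : 'M[R]_(q, r)) :
  map_mx Imc (x *m map_mx toC B) = map_mx Imc x *m B.
Proof.
apply/matrixP => i j; rewrite !mxE raddf_sum; apply: eq_bigr => l _.
by rewrite !mxE; apply: Im_mul_real.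
Qed.

Variables (n : nat) (B : 'M[R]_n) (v : 'cV[R]_n) (c : R).
Hypothesis B_sym : B^T = B.
Hypothesis eigen_orth : forall r z, B *m z = r *: z -> c < r -> dot z v = 0.

Lemma real_eigenrow_orth (y : 'rV[R]_n) r :
  y *m B = r *: y -> c < r -> y *m v = 0.
Proof.
move=> yB cr; have By : B *m y^T = r *: y^T by rewrite -B_sym -trmx_mul yB linearZ.
by apply/matrixP => i j; rewrite !ord1 -[y]trmxK dot_mx (eigen_orth By cr) mxE.
Qed.

Lemma complex_eigenrow_orth (x : 'rV[R[i]]_n) (r : R) :
  x *m map_mx toC B = toC r *: x -> c < r -> x *m map_mx toC v = 0.
Proof.
move=> xB cr.
have eigRe : map_mx Rec x *m B = r *: map_mx Rec x.
  rewrite -map_Re_mulmx_real xB; apply/matrixP => i j.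
  by rewrite !mxE mulrC Re_mul_real mulrC.
have eigIm : map_mx Imc x *m B = r *: map_mx Imc x.
  rewrite -map_Im_mulmx_real xB; apply/matrixP => i j.
  by rewrite !mxE mulrC Im_mul_real mulrC.
apply/matrixP => i j; rewrite [RHS]mxE.
have /matrixP/(_ i j) := map_Re_mulmx_real x v.
have /matrixP/(_ i j) := map_Im_mulmx_real x v.
rewrite (real_eigenrow_orth eigRe cr) (real_eigenrow_orth eigIm cr) !mxE.
by case: (\sum_(l < n) _) => a b /= -> ->.
Qed.

(* Diagonalize the complexification of B by a unitary P: in the coordinates
   W = P v both quadratic forms are sums over the spectrum of B, and the
   coordinates of W on eigenvalues above c vanish. *)
Lemma symmetric_rayleigh_le : dot v (B *m v) <= c * dot v v.
Proof.
set BC := map_mx toC B; set vC := map_mx toC v.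
have BC_herm : BC \is hermsymmx.
  apply/is_hermitianmxP; rewrite expr0 scale1r /BC map_trmx B_sym -map_mx_comp.
  by apply/matrixP => i j; rewrite !mxE /= conj_toC.
have /orthomx_spectralP BCE := hermitian_normalmx BC_herm.
set P := spectralmx BC in BCE; set D := spectral_diag BC in BCE.
have P_unitary : P \is unitarymx := spectral_unitarymx BC.
have D_real : D \is a realmx := hermitian_spectral_diag_real BC_herm.
set W := P *m vC.
have vCP : vC^T *m P^t* = W^t*.
  rewrite /W trmx_mul map_mxM; congr (_ *m _).
  by apply/matrixP => i j; rewrite !mxE; exact/esym/conj_toC.
have toC_dot u w : toC (dot u w) = ((map_mx toC u)^T *m map_mx toC w) 0 0.
  by rewrite -dot_mx map_trmx -map_mxM [RHS]mxE.
have quadB : toC (dot v (B *m v)) = \sum_j (W j 0)^* * D 0 j * W j 0.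
  rewrite toC_dot map_mxM -/BC -/vC BCE invmx_unitary // !mulmxA vCP.
  rewrite -(mulmxA _ P) -/W mul_mx_diag !mxE; apply: eq_bigr => j _.
  by rewrite !mxE.
have quad1 : toC (dot v v) = \sum_j (W j 0)^* * W j 0.
  have PtP : P^t* *m P = 1%:M by rewrite -invmx_unitary // mulVmx ?unitarymx_unit.
  rewrite toC_dot -/vC -[vC in _ *m vC]mul1mx -PtP !mulmxA vCP -mulmxA -/W mxE.
  by apply: eq_bigr => j _; rewrite !mxE.
rewrite -lecR rmorphM /= quadB quad1 mulr_sumr; apply: ler_sum => j _.
have /complex_realP [r Dj] : D 0 j \is Num.real by move/mxOverP: D_real; apply.
rewrite Dj mulrAC [toC c * _]mulrC.
have [rc|cr] := lerP r c.
  by apply: ler_wpM2l; [rewrite mulrC mul_conjC_ge0 | rewrite lecR].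
suff -> : W j 0 = 0 by rewrite !(mulr0, mul0r).
have rowP_eigen : row j P *m BC = toC r *: row j P.
  have PBC : P *m BC = diag_mx D *m P.
    by rewrite {1}BCE !mulmxA mulmxV ?unitarymx_unit // mul1mx.
  by rewrite -row_mul PBC mul_diag_mx; apply/matrixP => i k; rewrite !mxE Dj.
by have /matrixP/(_ 0 0) := complex_eigenrow_orth rowP_eigen cr; rewrite -row_mul !mxE.
Qed.

End SymmetricRayleigh.

Section SingularValues.
Variables (R : realType) (n : nat) (Q : 'M[R]_n) (s : R).
Hypothesis s_max : max_sv_in01 Q s.

Lemma max_sv_in01_ub t : singular_value Q t -> 0 < t < 1 -> t <= s.
Proof. by case: s_max => [[none _] svt /(conj svt) /none | [_ ub]] //; apply: ub. Qed.

Lemma max_sv_in01_ge0 : 0 <= s.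
Proof. by case: s_max => [[_ ->] | [[_ /andP[s_gt0 _]] _]] //; apply: ltW. Qed.

Lemma eigen_QtQ_singular (z : 'cV[R]_n) r :
  Q^T *m Q *m z = r *: z -> z != 0 -> 0 <= r -> singular_value Q (Num.sqrt r).
Proof.
move=> QQz z_neq0 r_ge0; split; first exact: sqrtr_ge0.
rewrite sqr_sqrtr //; apply/eigenvalueP; exists z^T; last by rewrite trmx_eq0.
have QtQ_sym : (Q^T *m Q)^T = Q^T *m Q by rewrite trmx_mul trmxK.
by rewrite -QtQ_sym -trmx_mul QQz linearZ.
Qed.

Lemma sqnorm_le_max_sv m (A : 'M[R]_(m, n)) (e : 'cV[R]_n) :
  (forall z, dot z z <= dot (Q *m z) (Q *m z) -> A *m z = 0) ->
  ker_orth A e -> dot (Q *m e) (Q *m e) <= s ^+ 2 * dot e e.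
Proof.
move=> Q_norm_ker eA; rewrite dot_mulmxl mulmxA.
apply: symmetric_rayleigh_le => [|r z QQz s2_lt_r]; first by rewrite trmx_mul trmxK.
have Qz : dot (Q *m z) (Q *m z) = r * dot z z by rewrite dot_mulmxl mulmxA QQz dotZr.
have [r_ge1|r_lt1] := lerP 1 r.
  by rewrite dotC eA // Q_norm_ker // Qz ler_peMl // dot_ge0.
have [->|z_neq0] := eqVneq z 0; first by rewrite dotC dot0r.
have r_gt0 : 0 < r by apply: le_lt_trans s2_lt_r; apply: sqr_ge0.
have sv := eigen_QtQ_singular QQz z_neq0 (ltW r_gt0).
have sqrt_le_s : Num.sqrt r <= s.
  by apply: max_sv_in01_ub sv _; rewrite sqrtr_gt0 r_gt0 -sqrtr1 ltr_sqrt.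
have : r <= s ^+ 2.
  by rewrite -(sqr_sqrtr (ltW r_gt0)) ler_sqr ?nnegrE ?sqrtr_ge0 ?max_sv_in01_ge0.
by rewrite leNgt s2_lt_r.
Qed.

End SingularValues.

Section LeastSquares.
Variables (R : realType) (m n : nat) (A : 'M[R]_(m, n)) (b : 'cV[R]_m).

Lemma min_norm_lsq_consistent (x x0 : 'cV[R]_n) :
  min_norm_lsq A b x -> A *m x0 = b -> A *m x = b.
Proof.
move=> [x_lsq _] Ax0; apply/eqP; rewrite -subr_eq0 -norm2_le0.
by have := x_lsq x0; rewrite Ax0 subrr [norm2 0]norm2E dot0r sqrtr0.
Qed.

Lemma min_norm_lsq_ker_orth (x : 'cV[R]_n) : min_norm_lsq A b x -> ker_orth A x.
Proof.
move=> [_ x_min] w Aw; have [->|w_neq0] := eqVneq w 0; first exact: dot0r.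
have w_gt0 : 0 < dot w w by rewrite dot_gt0.
set d := dot x w; set S := dot w w in w_gt0 *.
have := x_min (x - (d / S) *: w).
rewrite mulmxBr -scalemxAr Aw scaler0 subr0 lexx => /(_ isT).
rewrite !norm2E ler_sqrt ?dot_ge0 // -scaleNr dotDZ -/d -/S -addrA lerDl.
have -> : 2 * - (d / S) * d + (- (d / S)) ^+ 2 * S = - (d ^+ 2 / S).
  by field; rewrite gt_eqF.
rewrite oppr_ge0 pmulr_lle0 ?invr_gt0 // => d2_le0.
by apply/eqP; rewrite -sqrf_eq0 eq_le d2_le0 sqr_ge0.
Qed.

Lemma nullproj_ker_orth (y p : 'cV[R]_n) : nullproj A y p -> ker_orth A (y - p).
Proof. by move=> [_ yp] w Aw; rewrite -dot_mx yp // mxE. Qed.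

Lemma iteration_error (K : 'M[R]_(n, m)) (x y p : 'cV[R]_n) :
  A *m x = b -> A *m p = 0 ->
  y + K *m (b - A *m y) - x - p = (1%:M - K *m A) *m (y - x - p).
Proof.
move=> Ax Ap; rewrite mulmxBl mul1mx -mulmxA !mulmxBr Ax Ap mulmx0 subr0.
by rewrite opprB (addrAC y) (addrAC (y - x)).
Qed.

End LeastSquares.

Theorem corollary3p13 (R : realType) (m n : nat) (A : 'M[R]_(m, n)) (b : 'cV[R]_m)
  (xdag : 'cV[R]_n) (mu : 'I_m -> R) (C : 'M[R]_m) (y : nat -> 'cV[R]_n)
  (pN : 'cV[R]_n) (s : R) :
  (forall i : 'I_m, row i A != 0) ->
  (exists x : 'cV[R]_n, A *m x = b) ->
  min_norm_lsq A b xdag ->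
  (forall i, 0 < mu i < 2) ->
  unit_upper C ->
  AS A mu = C *m A ->
  (forall k, y k.+1 = y k + A^T *m C^T *m Lam mu *m Mdiag A *m (b - A *m y k)) ->
  nullproj A (y 0%N) pN ->
  max_sv_in01 (Qmat A mu) s ->
  forall k : nat, (1 <= k)%N ->
    norm2 (y k - xdag - pN) <= s * norm2 (y k.-1 - xdag - pN) /\
    norm2 (y k - xdag - pN) <= s ^+ k * norm2 (y 0%N - xdag - pN).
Proof.
move=> rowA [x0 Ax0] xdag_min mu_in02 _ AS_CA y_next pN_proj s_max k k_ge1.
have Axdag : A *m xdag = b := min_norm_lsq_consistent xdag_min Ax0.
have QE := Qmat_iterationE AS_CA.
pose e j := y j - xdag - pN.
have e_next j : e j.+1 = Qmat A mu *m e j.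
  by rewrite /e y_next (iteration_error _ _ Axdag pN_proj.1) QE.
have e_orth j : ker_orth A (e j).
  elim: j => [|j IH].
    rewrite /e addrAC; apply: ker_orthB; first exact: nullproj_ker_orth pN_proj.
    exact: min_norm_lsq_ker_orth xdag_min.
  rewrite e_next QE.
  have -> : A^T *m C^T *m Lam mu *m Mdiag A = A^T *m (C^T *m Lam mu *m Mdiag A).
    by rewrite !mulmxA.
  exact: ker_orth_step.
have s_ge0 := max_sv_in01_ge0 s_max.
have step j : norm2 (e j.+1) <= s * norm2 (e j).
  rewrite e_next; apply: norm2_le_scale s_ge0 _.
  exact: (sqnorm_le_max_sv s_max (Qmat_norm_fixed_ker rowA mu_in02) (e_orth j)).
case: k k_ge1 => // k _; split; first exact: step.
elim: k.+1 => [|j IH]; first by rewrite expr0 mul1r.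
by rewrite exprS -mulrA (le_trans (step j)) // ler_wpM2l.
Qed.
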